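(* Consider a two-player matrix game between a player $\mathrm{SV}$ (the group of surrounding vehicles) and a player $\mathrm{EV}$ (the ego vehicle). Player $\mathrm{SV}$ has exactly two actions $\pi_{\mathrm{SV}}^1$ (``Assert'') and $\pi_{\mathrm{SV}}^2$ (``Yield''); player $\mathrm{EV}$ has finitely many actions $\pi_{\mathrm{EV}}^1,\dots,\pi_{\mathrm{EV}}^{M_{\mathrm{EV}}}$. For each $i\in\{1,2\}$ and $m\in\{1,\dots,M_{\mathrm{EV}}\}$ let $J_{\mathrm{SV}}^{im}$ and $J_{\mathrm{EV}}^{im}$ be real numbers (the costs of $\mathrm{SV}$ and $\mathrm{EV}$ under the action tuple $(\pi_{\mathrm{SV}}^i,\pi_{\mathrm{EV}}^m)$). Let $b(\pi_{\mathrm{SV}}^1), b(\pi_{\mathrm{SV}}^2)\in[0,1]$ with $b(\pi_{\mathrm{SV}}^1)+b(\pi_{\mathrm{SV}}^2)=1$, and define the modified cost of $\mathrm{SV}$ by $\bar J_{\mathrm{SV}}^{im}:=(1-b(\pi_{\mathrm{SV}}^i))J_{\mathrm{SV}}^{im}$; the cost of $\mathrm{EV}$ is $J_{\mathrm{EV}}^{im}$. Assume that the inequalities $0\le J_{\mathrm{SV}}^{1m}\le J_{\mathrm{SV}}^{2m}$ and $J_{\mathrm{EV}}^{1m}\ge J_{\mathrm{EV}}^{2m}\ge 0$ hold for all $m\in\{1,\dots,M_{\mathrm{EV}}\}$ (for all feasible action tuples). If $b(\pi_{\mathrm{SV}}^1)\ge 0.5$, then there exists $p\in\{1,\dots,M_{\mathrm{EV}}\}$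 such that the action tuple $(\pi_{\mathrm{SV}}^1,\pi_{\mathrm{EV}}^p)$ is a pure-strategy Nash equilibrium, i.e. $\bar J_{\mathrm{SV}}^{1p}\le \bar J_{\mathrm{SV}}^{2p}$ and $J_{\mathrm{EV}}^{1p}\le J_{\mathrm{EV}}^{1m}$ for all $m\in\{1,\dots,M_{\mathrm{EV}}\}$.
   Context: An action tuple is called feasible if the corresponding simulated multi-vehicle trajectories are collision-free; it is assumed that at least one feasible action tuple exists. A pure-strategy Nash equilibrium is an action tuple from which no player can lower its own cost (modified cost $\bar J_{\mathrm{SV}}$ for $\mathrm{SV}$, $J_{\mathrm{EV}}$ for $\mathrm{EV}$) by unilaterally changing its action. The number $b(\pi_{\mathrm{SV}}^i)$ is the belief that the surrounding vehicles take action $\pi_{\mathrm{SV}}^i$. *)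

From mathcomp Require Import all_boot all_order all_algebra.
Set Implicit Arguments. Unset Strict Implicit. Unset Printing Implicit Defensive.
Import Order.TTheory GRing.Theory Num.Theory.
Local Open Scope ring_scope.

(* SV actions: 'I_2 (ord0 = "Assert" = pi_SV^1, 1 = "Yield" = pi_SV^2).
   EV actions: 'I_M (index m-1 stands for pi_EV^m).
   Costs JSV i m, JEV i m : R ; belief b i : R. *)

Definition modJSV (R : pzRingType) (M : nat) (b : 'I_2 -> R)
  (JSV : 'I_2 -> 'I_M -> R) (i : 'I_2) (m : 'I_M) : R :=
  (1 - b i) * JSV i m.

Definition pure_nash (R : numDomainType) (M : nat)
  (CSV CEV : 'I_2 -> 'I_M -> R) (i : 'I_2) (p : 'I_M) : Prop :=
  (forall i' : 'I_2, CSV i p <= CSV i' p) /\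
  (forall m : 'I_M, CEV i p <= CEV i m).

From mathcomp Require Import all_boot all_order all_algebra.
From mathcomp Require Import lra.
Import Order.TTheory GRing.Theory Num.Theory.
Local Open Scope ring_scope.

(* Take for EV any cost-minimising reply p to "Assert". Since the beliefs sum
   to one, the modified SV costs at p are b(Assert) J^{2p} for "Yield" and
   (1 - b(Assert)) J^{1p} for "Assert"; with b(Assert) >= 1/2 and
   0 <= J^{1p} <= J^{2p} the former dominates, so SV does not deviate either. *)

Lemma ord2_cases (i : 'I_2) : i = ord0 \/ i = lift ord0 ord0.
Proof. by case: i => [[|[|//]] Hi]; [left | right]; apply: val_inj. Qed.

Lemma exists_ord_argmin {R : realDomainType} {M : nat} (f : 'I_M -> R) :
  (0 < M)%N -> exists p : 'I_M, forall m, f p <= f m.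
Proof.
move=> M_gt0; case: (@arg_minP _ _ _ (Ordinal M_gt0) predT f isT) => p _ p_min.
by exists p => m; apply: p_min.
Qed.

Lemma ler_complM_half (R : realFieldType) (b x y : R) :
  1 / 2 <= b -> 0 <= x <= y -> (1 - b) * x <= b * y.
Proof. by move=> b_ge x_bounds; nra. Qed.

Lemma modJSV_assert_min (R : realFieldType) (M : nat)
  (JSV : 'I_2 -> 'I_M -> R) (b : 'I_2 -> R) (p : 'I_M) :
  b ord0 + b (lift ord0 ord0) = 1 -> 1 / 2 <= b ord0 ->
  0 <= JSV ord0 p <= JSV (lift ord0 ord0) p ->
  forall i, modJSV b JSV ord0 p <= modJSV b JSV i p.
Proof.
move=> bsum b_ge JSV_p i; rewrite /modJSV.
case: (ord2_cases i) => ->; first exact: lexx.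
have -> : 1 - b (lift ord0 ord0) = b ord0 by lra.
exact: ler_complM_half.
Qed.

Theorem proposition1 (R : realFieldType) (M : nat) (hM : (0 < M)%N)
  (JSV JEV : 'I_2 -> 'I_M -> R) (b : 'I_2 -> R)
  (hb01 : forall i, 0 <= b i <= 1)
  (hbsum : b ord0 + b (lift ord0 ord0) = 1)
  (hSV : forall m, 0 <= JSV ord0 m /\ JSV ord0 m <= JSV (lift ord0 ord0) m)
  (hEV : forall m, JEV ord0 m >= JEV (lift ord0 ord0) m /\ JEV (lift ord0 ord0) m >= 0)
  (hb : 1 / 2 <= b ord0) :
  exists p : 'I_M, pure_nash (modJSV b JSV) JEV ord0 p.
Proof.
have [p p_min] := exists_ord_argmin (JEV ord0) hM.
exists p; split; last exact: p_min.
have [JSV0_ge0 JSV_le] := hSV p.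
by apply: modJSV_assert_min => //; rewrite JSV0_ge0 JSV_le.
Qed.
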